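(* Every $G$-invariant proper ideal of $\mathcal{A}(D)$ is contained in $\mathcal{V}(D)$.
   Context: Let $G$ be a group generated by a conjugacy class $D$ of involutions such that for all $d,e\in D$ the order of $de$ is $1$, $2$ or $3$. Lines of the Fischer space on $D$ are triples $\{d,e,d^e\}$ with $d,e\in D$ non-commuting. $\mathcal{A}(D)$ is the $\mathbb{F}_2$-vector space with basis $D$ (finite subsets of $D$ under symmetric difference), with bilinear product determined by $d*e=d+e+f$ if $\{d,e,f\}$ is a line and $d*e=0$ otherwise. $G$ acts on $\mathcal{A}(D)$ by linearly extending conjugation on $D$. The bilinear form $\langle\cdot,\cdot\rangle$ is determined by $\langle d,e\rangle=1$ if $d,e$ do not commute and $0$ otherwise; $\mathcal{V}(D)$ is its radical. *)

From HB Require Import structures.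
From mathcomp Require Import all_boot.
From mathcomp Require Import finmap.

Set Implicit Arguments.
Unset Strict Implicit.
Unset Printing Implicit Defensive.

Local Open Scope fset_scope.
Local Open Scope group_scope.

(* A (possibly infinite) group is a [groupType] from mathcomp/boot/monoid.v;
   conjugation x ^ y := y^-1 * x * y.                                       *)

Section Fischer.
Variable gT : groupType.

Definition is_conj_class (D : {pred gT}) : Prop :=
  exists x : gT, forall y : gT, y \in D <-> exists g : gT, y = x ^ g.

(* gT is generated by D: every element is a finite product of elements of D
   (D consists of involutions, so inverses are not needed, but we allow them
   anyway by closing under products of elements of D and their inverses). *)
Definition generated_by (D : {pred gT}) : Prop :=
  forall g : gT, exists s : seq (bool * gT),
    (forall p, p \in s -> p.2 \in D) /\
    g = \prod_(p <- s) (if p.1 then p.2 else p.2^-1).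

Definition involutions (D : {pred gT}) : Prop :=
  forall d, d \in D -> d * d = 1 /\ d != 1.

Definition order_le3 (D : {pred gT}) : Prop :=
  forall d e, d \in D -> e \in D ->
    exists n : nat, [/\ (1 <= n)%N, (n <= 3)%N & (d * e) ^+ n = 1].

(* ---- The algebra A(D) over F_2: finite subsets of D, sum = symmetric
   difference. *)
Definition inA (D : {pred gT}) (x : {fset gT}) : Prop :=
  forall d, d \in x -> d \in D.

Definition fsymd (x y : {fset gT}) : {fset gT} := (x `\` y) `|` (y `\` x).

(* Product of basis elements: d*e = d+e+f if {d,e,f} is a line
   (f = d^e, d and e non-commuting), and 0 otherwise. *)
Definition bprod (d e : gT) : {fset gT} :=
  if d * e == e * d then fset0 else [fset d; e; d ^ e].

Definition amul (x y : {fset gT}) : {fset gT} :=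
  \big[fsymd/fset0]_(d <- x) \big[fsymd/fset0]_(e <- y) bprod d e.

(* Bilinear form: <d,e> = 1 iff d and e do not commute (true = 1 in F_2). *)
Definition bform (x y : {fset gT}) : bool :=
  \big[addb/false]_(d <- x) \big[addb/false]_(e <- y) (d * e != e * d).

Definition inV (D : {pred gT}) (x : {fset gT}) : Prop :=
  inA D x /\ forall y, inA D y -> bform x y = false.

Definition gact (g : gT) (x : {fset gT}) : {fset gT} := [fset d ^ g | d in x].

Definition is_ideal (D : {pred gT}) (I : {fset gT} -> Prop) : Prop :=
  [/\ forall x, I x -> inA D x,
      I fset0,
      forall x y, I x -> I y -> I (fsymd x y)
    & forall a x, inA D a -> I x -> I (amul a x) /\ I (amul x a)].

Definition proper_ideal (D : {pred gT}) (I : {fset gT} -> Prop) : Prop :=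
  is_ideal D I /\ exists a, inA D a /\ ~ I a.

Definition G_invariant (I : {fset gT} -> Prop) : Prop :=
  forall g x, I x -> I (gact g x).

End Fischer.

From HB Require Import structures.
From mathcomp Require Import all_boot.
From mathcomp Require Import finmap.

(* For d in D and x in A(D) one has  d*x + x + x^d = <x, d> d : the basis
   element e contributes d*e + e + e^d, which vanishes when d and e commute
   and equals d when {d, e, d^e} is a line, since then d^e = e^d.  Hence a
   G-invariant ideal containing an x outside V(D) contains some d in D, hence
   all of D (a single conjugacy class), hence all of A(D). *)

Set Implicit Arguments.
Unset Strict Implicit.
Unset Printing Implicit Defensive.

Local Open Scope fset_scope.
Local Open Scope group_scope.

Section FischerAlgebra.
Variable gT : groupType.
Implicit Types (d e z : gT) (x y : {fset gT}).

Lemma in_fsymd z x y : (z \in fsymd x y) = (z \in x) (+) (z \in y).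
Proof. by rewrite /fsymd in_fsetU !in_fsetD; case: (z \in x); case: (z \in y). Qed.

Lemma in_big_fsymd (I : Type) (s : seq I) (F : I -> {fset gT}) z :
  (z \in \big[@fsymd gT/fset0]_(i <- s) F i) = \big[addb/false]_(i <- s) (z \in F i).
Proof.
elim: s => [|i s IHs]; first by rewrite !big_nil in_fset0.
by rewrite !big_cons in_fsymd IHs.
Qed.

Lemma mem_uniq_sum_eq (s : seq gT) z :
  uniq s -> (z \in s) = \big[addb/false]_(e <- s) (z == e).
Proof.
elim: s => [|e s IHs] /=; first by rewrite big_nil.
case/andP=> /negbTE e_notin_s uniq_s; rewrite big_cons in_cons -IHs //.
by case: eqP => // ->; rewrite e_notin_s.
Qed.

Lemma mem_fset_sum_eq x z : (z \in x) = \big[addb/false]_(e <- x) (z == e).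
Proof. by rewrite mem_uniq_sum_eq ?fset_uniq. Qed.

Lemma fset_big_fsymd1 x : x = \big[@fsymd gT/fset0]_(e <- x) [fset e].
Proof.
apply/fsetP => z; rewrite in_big_fsymd mem_fset_sum_eq.
by apply: eq_bigr => e _; rewrite in_fset1.
Qed.

Lemma gact_fset1 g e : gact g [fset e] = [fset e ^ g].
Proof.
apply/fsetP => z; rewrite in_fset1; apply/imfsetP/eqP => /=.
  by case=> f; rewrite in_fset1 => /eqP -> ->.
by move=> ->; exists e; rewrite ?in_fset1.
Qed.

Section Involution.
Variable d : gT.
Hypothesis dd1 : d * d = 1.

Lemma conjg_involK z : (z ^ d) ^ d = z.
Proof. by rewrite -conjgM dd1 conjg1. Qed.

Lemma in_gact_invol z x : (z \in gact d x) = (z ^ d \in x).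
Proof.
apply/imfsetP/idP => /= [[e ex ->]|zdx]; first by rewrite conjg_involK.
by exists (z ^ d); rewrite ?conjg_involK.
Qed.

Lemma eq_conjg_invol z e : (z ^ d == e) = (z == e ^ d).
Proof. by apply/eqP/eqP => [<-|->]; rewrite conjg_involK. Qed.

End Involution.

Section Lines.
Variable D : {pred gT}.
Hypotheses (hinv : involutions D) (hord : order_le3 D).

(* Order 3 of de is what makes the third point of a line symmetric in d, e. *)
Lemma line_conjgC d e : d \in D -> e \in D -> d * e != e * d ->
  [/\ d ^ e = e ^ d, d != e, d ^ e != d & d ^ e != e].
Proof.
move=> dD eD nc.
have [/mulg1_eq d_inv _] := hinv dD; have [/mulg1_eq e_inv _] := hinv eD.
have d_neq_e : d != e by apply: contra nc => /eqP ->.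
split => //.
- have [n [n_gt0 n_le3 de_n]] := hord dD eD.
  move: n n_gt0 n_le3 de_n => [|[|[|[|n]]]] // _ _.
  + by rewrite expg1 => /mulg1_eq de1; move: nc; rewrite -de1 d_inv eqxx.
  + rewrite expgS expg1 => /mulg1_eq de2; move: nc.
    by rewrite -de2 invgM d_inv e_inv eqxx.
  + rewrite expgS expgS expg1 => de3.
    rewrite !conjgE d_inv e_inv !mulgA.
    have dede : (d * e * d) * (e * d * e) = 1 by rewrite -de3 !mulgA.
    by rewrite -(mulg1_eq dede) !invgM d_inv e_inv mulgA.
- by apply: contra nc => /eqP de_d; apply/eqP; rewrite conjgC de_d.
- apply: contra d_neq_e => /eqP; rewrite conjgE e_inv => ede.
  have de1 : d * e = 1 by apply: (mulgI e); rewrite mulg1.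
  by rewrite -(mulg1_eq de1) d_inv.
Qed.

Lemma in_bprod_conjg z d e : d \in D -> e \in D ->
  (z \in bprod d e) (+) (z == e) (+) (z ^ d == e) = (d * e != e * d) && (z == d).
Proof.
move=> dD eD; have [dd1 _] := hinv dD.
rewrite eq_conjg_invol // /bprod.
case: eqP => [de_ed|/eqP nc] /=.
  have -> : e ^ d = e by rewrite conjgE (mulg1_eq dd1) -de_ed mulgA dd1 mul1g.
  by case: (z == e).
have [<- d_neq_e /negbTE ded_neq_d /negbTE ded_neq_e] := line_conjgC dD eD nc.
rewrite !inE.
case: (z =P d) => [->|_]; first by rewrite (negbTE d_neq_e) eq_sym ded_neq_d.
case: (z =P e) => [->|_]; first by rewrite eq_sym ded_neq_e.
by case: (z =P d ^ e).
Qed.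

Lemma amul_fset1_gact d x : d \in D -> inA D x ->
  fsymd (fsymd (amul [fset d] x) x) (gact d x) =
  if bform x [fset d] then [fset d] else fset0.
Proof.
move=> dD xD; have [dd1 _] := hinv dD.
apply/fsetP => z.
have -> : (z \in if bform x [fset d] then [fset d] else fset0) =
          bform x [fset d] && (z == d) by case: ifP; rewrite inE.
rewrite !in_fsymd in_gact_invol // /amul in_big_fsymd big_seq_fset1 in_big_fsymd.
rewrite !mem_fset_sum_eq -!big_split /=.
rewrite (eq_big_seq (fun e => (d * e != e * d) && (z == d))) => [|e ex]; last first.
  exact: in_bprod_conjg dD (xD e ex).
rewrite -big_distrl /=; congr (_ && _); apply: eq_bigr => e _.
by rewrite big_seq_fset1 eq_sym.
Qed.

End Lines.

Section Ideals.
Variables (D : {pred gT}) (I : {fset gT} -> Prop).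
Hypothesis I_ideal : is_ideal D I.

Lemma ideal_big_fsymd (s : seq gT) :
  (forall e, e \in s -> I [fset e]) -> I (\big[@fsymd gT/fset0]_(e <- s) [fset e]).
Proof.
case: I_ideal => _ I0 Iadd _.
elim: s => [|e s IHs] Is; first by rewrite big_nil.
rewrite big_cons; apply: Iadd; first by apply: Is; rewrite mem_head.
by apply: IHs => f fs; apply: Is; rewrite inE fs orbT.
Qed.

Lemma ideal_fset1_improper e : is_conj_class D -> G_invariant I ->
  e \in D -> I [fset e] -> forall a, inA D a -> I a.
Proof.
move=> [d0 D_class] Iinv eD Ie a aD.
rewrite (fset_big_fsymd1 a); apply: ideal_big_fsymd => f fa.
have [g def_e] := (D_class e).1 eD; have [h def_f] := (D_class f).1 (aD f fa).
have := Iinv (g^-1 * h) _ Ie.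
by rewrite gact_fset1 def_e -conjgM mulgA mulgV mul1g -def_f.
Qed.

Lemma ideal_bform_fset1 d x : involutions D -> order_le3 D -> G_invariant I ->
  d \in D -> I x -> bform x [fset d] -> I [fset d].
Proof.
case: I_ideal => Isub _ Iadd Imul hinv hord Iinv dD Ix xd.
have dA : inA D [fset d] by move=> f; rewrite in_fset1 => /eqP ->.
have := amul_fset1_gact hinv hord dD (Isub _ Ix); rewrite xd => <-.
by apply: (Iadd); [apply: (Iadd) => //; exact: (Imul _ _ dA Ix).1 | exact: Iinv].
Qed.

End Ideals.

Lemma bform_exists_fset1 x y : bform x y -> exists2 e, e \in y & bform x [fset e].
Proof.
move=> xy; apply/hasP; apply: contraLR xy => /hasPn x_perp_y.
rewrite /bform exchange_big /= big1_seq // => e /andP[_ ey].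
by have := x_perp_y e ey; rewrite /bform; under eq_bigr do rewrite big_seq_fset1; move/negbTE.
Qed.

End FischerAlgebra.

Theorem proposition2p4 (gT : groupType) (D : {pred gT})
  (hconj : is_conj_class D) (hgen : generated_by D)
  (hinv : involutions D) (hord : order_le3 D)
  (I : {fset gT} -> Prop) :
  proper_ideal D I -> G_invariant I -> forall x, I x -> inV D x.
Proof.
move=> [I_ideal [a [aD I_a]]] Iinv x Ix.
split; first by case: I_ideal => Isub _ _ _; exact: Isub.
move=> y yD; apply/negP => /bform_exists_fset1[e ey xe].
have eD : e \in D by exact: yD.
have Ie := ideal_bform_fset1 I_ideal hinv hord Iinv eD Ix xe.
exact/I_a/(ideal_fset1_improper I_ideal hconj Iinv eD Ie).
Qed.
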